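(* Let $\beta\in(1,3/2]$. Suppose $\omega,\omega'\in\Omega$ and $\upsilon,\upsilon'\in\Upsilon$ satisfy $\omega\prec\omega'$ and $\upsilon\prec\upsilon'$. Then for every $\vec z\in S_\beta$, $$(d_1(\omega,\upsilon,\vec z),d_2(\omega,\upsilon,\vec z),\ldots)\preceq(d_1(\omega',\upsilon',\vec z),d_2(\omega',\upsilon',\vec z),\ldots).$$
   Context: Let $\vec q_0=(0,0)$, $\vec q_1=(1,0)$, $\vec q_2=(0,1)$, $f_{\vec q_i}(\vec z)=(\vec z+\vec q_i)/\beta$, and $S_\beta$ the attractor of this IFS, which for $1<\beta\le3/2$ is the closed triangle with vertices $(0,0)$, $(\frac1{\beta-1},0)$, $(0,\frac1{\beta-1})$. Subsets of $S_\beta$: $E_0=[0,\frac1\beta)\times[0,\frac1\beta)$; $E_1=\{0\le y<\frac1\beta,\ \frac{1}{\beta(\beta-1)}<x+y\le\frac{1}{\beta-1}\}$; $E_2=\{0\le x<\frac1\beta,\ \frac{1}{\beta(\beta-1)}<x+y\le\frac{1}{\beta-1}\}$; $C_{01}=\{x\ge\frac1\beta,\ 0\le y<\frac1\beta,\ x+y\le\frac{1}{\beta(\beta-1)}\}$; $C_{12}=\{x\ge\frac1\beta,\ y\ge\frac1\beta,\ \frac{1}{\beta(\beta-1)}<x+y\le\frac{1}{\beta-1}\}$; $C_{02}=\{0\le x<\frac1\beta,\ y\ge\frac1\beta,\ x+y\le\frac{1}{\beta(\beta-1)}\}$; $C_{012}=\{x\ge\frac1\beta,\ y\ge\frac1\beta,\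 x+y\le\frac{1}{\beta(\beta-1)}\}$. Let $\Omega=\{0,1\}^{\mathbb N}$, $\Upsilon=\{0,1,2\}^{\mathbb N}$, with left shifts $\sigma$, $\sigma'$. Define $K_\beta:\Omega\times\Upsilon\times S_\beta\to\Omega\times\Upsilon\times S_\beta$ by: $K_\beta(\omega,\upsilon,\vec z)=(\omega,\upsilon,\beta\vec z-\vec q_i)$ if $\vec z\in E_i$; $=(\sigma\omega,\upsilon,\beta\vec z-\vec q_i)$ if $\omega_1=0$ and $\vec z\in C_{ij}$, $ij\in\{01,12,02\}$; $=(\sigma\omega,\upsilon,\beta\vec z-\vec q_j)$ if $\omega_1=1$ and $\vec z\in C_{ij}$; $=(\omega,\sigma'\upsilon,\beta\vec z-\vec q_i)$ if $\vec z\in C_{012}$ and $\upsilon_1=i$. The digit $d_1(\omega,\upsilon,\vec z)\in\{\vec q_0,\vec q_1,\vec q_2\}$ is the vector subtracted in this definition (so the third coordinate of $K_\beta(\omega,\upsilon,\vec z)$ is $\beta\vec z-d_1$), and $d_n=d_1\circ K_\beta^{n-1}$. The relation $\prec$ ($\preceq$) denotes the (strict / non-strict) lexicographic order on $\Omega$, on $\Upsilon$, and on $\{\vec q_0,\vec q_1,\vec q_2\}^{\mathbb N}$, where in the last case symbols are ordered $\vec q_0<\vec q_1<\vec q_2$. *)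

From Stdlib Require Import Reals Lra ClassicalEpsilon.
Open Scope R_scope.

Inductive digit : Type := D0 | D1 | D2.

Definition digit_rank (d : digit) : nat :=
  match d with D0 => 0%nat | D1 => 1%nat | D2 => 2%nat end.

Definition qvec (d : digit) : R * R :=
  match d with D0 => (0, 0) | D1 => (1, 0) | D2 => (0, 1) end.

(* Sequences indexed from 0: u 0 is the paper's u_1. *)
Definition Omega := nat -> bool.      (* {0,1}^N with 0 = false, 1 = true *)
Definition Upsilon := nat -> digit.

Definition shift {A : Type} (u : nat -> A) : nat -> A := fun n => u (S n).

Definition lex_lt {A : Type} (lt : A -> A -> Prop) (u v : nat -> A) : Prop :=
  exists n, (forall k, (k < n)%nat -> u k = v k) /\ lt (u n) (v n).
Definition lex_le {A : Type} (lt : A -> A -> Prop) (u v : nat -> A) : Prop :=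
  lex_lt lt u v \/ (forall k, u k = v k).

Definition bool_lt (a b : bool) : Prop := a = false /\ b = true.
Definition digit_lt (a b : digit) : Prop := (digit_rank a < digit_rank b)%nat.

Definition S_beta (b : R) (z : R * R) : Prop :=
  0 <= fst z /\ 0 <= snd z /\ fst z + snd z <= 1 / (b - 1).

Section Regions.
Variable b : R.
Let a := 1 / b.
Let c := 1 / (b * (b - 1)).
Let t := 1 / (b - 1).
Definition E0 (z : R * R) : Prop := let (x, y) := z in 0 <= x < a /\ 0 <= y < a.
Definition E1 (z : R * R) : Prop := let (x, y) := z in 0 <= y < a /\ c < x + y <= t.
Definition E2 (z : R * R) : Prop := let (x, y) := z in 0 <= x < a /\ c < x + y <= t.
Definition C01 (z : R * R) : Prop := let (x, y) := z in a <= x /\ 0 <= y < a /\ x + y <= c.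
Definition C12 (z : R * R) : Prop := let (x, y) := z in a <= x /\ a <= y /\ c < x + y <= t.
Definition C02 (z : R * R) : Prop := let (x, y) := z in 0 <= x < a /\ a <= y /\ x + y <= c.
Definition C012 (z : R * R) : Prop := let (x, y) := z in a <= x /\ a <= y /\ x + y <= c.
End Regions.

Definition state : Type := (Omega * Upsilon * (R * R))%type.

Definition affine (b : R) (z : R * R) (d : digit) : R * R :=
  (b * fst z - fst (qvec d), b * snd z - snd (qvec d)).

Definition pick (P : Prop) {A : Type} (x y : A) : A :=
  if excluded_middle_informative P then x else y.

(* Cases are tested in the
   paper's order E0,E1,E2,C01,C12,C02,C012; these sets are pairwise disjoint. *)
Definition K_step (b : R) (s : state) : state * digit :=
  let '(w, u, z) := s in
  let mk w' u' d := ((w', u', affine b z d), d) in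
  pick (E0 b z) (mk w u D0)
  (pick (E1 b z) (mk w u D1)
  (pick (E2 b z) (mk w u D2)
  (pick (C01 b z) (if w 0%nat then mk (shift w) u D1 else mk (shift w) u D0)
  (pick (C12 b z) (if w 0%nat then mk (shift w) u D2 else mk (shift w) u D1)
  (pick (C02 b z) (if w 0%nat then mk (shift w) u D2 else mk (shift w) u D0)
  (pick (C012 b z) (mk w (shift u) (u 0%nat))
  (* outside S_beta: unspecified default *)
  (mk w u D0))))))).

Definition K (b : R) (s : state) : state := fst (K_step b s).
Definition d1 (b : R) (s : state) : digit := snd (K_step b s).

(* digit sequence: dseq b s n = d_{n+1}(s) = d_1 (K^n s) *)
Definition dseq (b : R) (s : state) : nat -> digit :=
  fun n => d1 b (Nat.iter n (K b) s).

(** The cell of the partition of [S_beta] containing [z] depends on [z] only,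
    and it determines which of three kinds of step [K_beta] performs: subtract
    a fixed digit; let the first symbol of [omega] choose between two digits,
    the larger one for [1]; or use the first symbol of [upsilon] as the digit.
    Hence if [omega <= omega'] and [upsilon <= upsilon'] lexicographically, one
    step from the same point either emits the same digit and leaves states
    that are again comparable in this sense, or emits a strictly smaller digit
    for [(omega, upsilon)]. Iterating gives the lexicographic comparison of the
    digit sequences. *)

From Pilot Require Import Defs.
From Stdlib Require Import Reals Lia Classical ClassicalEpsilon.
Open Scope R_scope.

(* [Reals] also defines [E1] and [d1], hence the qualified [Defs.E1], [Defs.d1]. *)

Lemma lex_lt_le {A : Type} (lt : A -> A -> Prop) (u v : nat -> A) :
  lex_lt lt u v -> lex_le lt u v.
Proof. now left. Qed.

Lemma lex_le_cons {A : Type} (lt : A -> A -> Prop) (u v : nat -> A) :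
  lex_le lt u v ->
  lt (u 0%nat) (v 0%nat) \/ (u 0%nat = v 0%nat /\ lex_le lt (shift u) (shift v)).
Proof.
  intros [[[|n] [Hpre Hlt]] | Heq].
  - now left.
  - right; split.
    + apply Hpre; lia.
    + left; exists n; split; [intros k Hk; apply Hpre; lia | exact Hlt].
  - right; split; [apply Heq | right; intro k; apply Heq].
Qed.

Section Simulation.

Variables (St A : Type) (lt : A -> A -> Prop).
Variables (next : St -> St) (out : St -> A) (P : St -> St -> Prop).

Hypothesis step_mono : forall s s', P s s' ->
  (out s = out s' /\ P (next s) (next s')) \/ lt (out s) (out s').

Let orbit_out (s : St) (n : nat) : A := out (Nat.iter n next s).

Lemma orbit_out_prefix s s' : P s s' -> forall n,
  ((forall k, (k < n)%nat -> orbit_out s k = orbit_out s' k)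
     /\ P (Nat.iter n next s) (Nat.iter n next s'))
  \/ lex_lt lt (orbit_out s) (orbit_out s').
Proof.
  intros HP n; induction n as [|n [[Hpre HPn] | Hlt]].
  - now left; split; [intros k Hk; lia |].
  - destruct (step_mono _ _ HPn) as [[Hout HPnext] | Hlt].
    + left; split; [| exact HPnext].
      intros k Hk; destruct (Nat.eq_dec k n) as [-> | Hne]; [exact Hout |].
      apply Hpre; lia.
    + right; exists n; split; assumption.
  - now right.
Qed.

Lemma lex_le_orbit_out s s' : P s s' -> lex_le lt (orbit_out s) (orbit_out s').
Proof.
  intros HP.
  destruct (classic (lex_lt lt (orbit_out s) (orbit_out s'))) as [Hlt | Hnlt].
  - now left.
  - right; intro k.
    destruct (orbit_out_prefix _ _ HP (S k)) as [[Hpre _] | Hlt]; [| contradiction].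
    apply Hpre; lia.
Qed.

End Simulation.

Lemma K_step_cases (b : R) (z : R * R) :
  (exists d, forall (w : Omega) (u : Upsilon),
        K_step b (w, u, z) = ((w, u, affine b z d), d))
  \/ (exists lo hi, digit_lt lo hi /\ forall (w : Omega) (u : Upsilon),
        let d := if w 0%nat then hi else lo in
        K_step b (w, u, z) = ((shift w, u, affine b z d), d))
  \/ (forall (w : Omega) (u : Upsilon),
        K_step b (w, u, z) = ((w, shift u, affine b z (u 0%nat)), u 0%nat)).
Proof.
  unfold K_step, pick, digit_lt; cbn.
  destruct (excluded_middle_informative (E0 b z)); [left; now exists D0 |].
  destruct (excluded_middle_informative (Defs.E1 b z)); [left; now exists D1 |].
  destruct (excluded_middle_informative (E2 b z)); [left; now exists D2 |].
  destruct (excluded_middle_informative (C01 b z)).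
  { right; left; exists D0, D1; split; [cbn; lia | now intros w u; destruct (w 0%nat)]. }
  destruct (excluded_middle_informative (C12 b z)).
  { right; left; exists D1, D2; split; [cbn; lia | now intros w u; destruct (w 0%nat)]. }
  destruct (excluded_middle_informative (C02 b z)).
  { right; left; exists D0, D2; split; [cbn; lia | now intros w u; destruct (w 0%nat)]. }
  destruct (excluded_middle_informative (C012 b z)); [now right; right |].
  left; now exists D0.
Qed.

Definition state_le (s s' : state) : Prop :=
  snd s = snd s'
  /\ lex_le bool_lt (fst (fst s)) (fst (fst s'))
  /\ lex_le digit_lt (snd (fst s)) (snd (fst s')).

Lemma K_step_mono (b : R) (s s' : state) : state_le s s' ->
  (Defs.d1 b s = Defs.d1 b s' /\ state_le (K b s) (K b s'))
  \/ digit_lt (Defs.d1 b s) (Defs.d1 b s').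
Proof.
  destruct s as [[w u] z], s' as [[w' u'] z'].
  intros [Hz [Hw Hu]]; cbn in Hz, Hw, Hu; subst z'.
  unfold Defs.d1, K.
  destruct (K_step_cases b z) as [[d Hd] | [[lo [hi [Hlohi Hd]]] | Hd]];
    rewrite !Hd; cbn.
  - now left.
  - destruct (lex_le_cons _ _ _ Hw) as [[-> ->] | [-> Hws]].
    + now right.
    + now left.
  - destruct (lex_le_cons _ _ _ Hu) as [Hlt | [-> Hus]].
    + now right.
    + now left.
Qed.

Theorem theorem4p1 (beta : R) (Hb1 : 1 < beta) (Hb2 : beta <= 3 / 2)
  (w w' : Omega) (u u' : Upsilon)
  (Hw : lex_lt bool_lt w w') (Hu : lex_lt digit_lt u u')
  (z : R * R) (Hz : S_beta beta z) :
  lex_le digit_lt (dseq beta (w, u, z)) (dseq beta (w', u', z)).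
Proof.
  apply (lex_le_orbit_out _ _ digit_lt (K beta) (Defs.d1 beta) state_le (K_step_mono beta)).
  split; [reflexivity | split; apply lex_lt_le; assumption].
Qed.
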